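(* Let $G$ be a finite group, $P$ a normal $p$-subgroup of $G$ and $R\trianglelefteq G$ with $R\le P$ such that $P/R$ is a chief factor of $G$ of order $p^n$ with $n>1$. Suppose that every normal subgroup $V$ of $G$ with $V<P$ satisfies $V\le R$. Let $H$ be a subgroup of $P$ with $R<RH<P$ such that $H$ is cyclic of prime order or of order $4$. If $T$ is a subgroup of $G$ with $HT=G$, then $T=G$. *)

From HB Require Import structures.
From mathcomp Require Import all_boot all_order all_fingroup all_solvable.
Set Implicit Arguments.
Unset Strict Implicit.
Unset Printing Implicit Defensive.

From HB Require Import structures.
From mathcomp Require Import all_boot all_order all_fingroup all_solvable.
Set Implicit Arguments.
Unset Strict Implicit.
Unset Printing Implicit Defensive.

Local Open Scope group_scope.

(* Since HT = G and H <= P, Dedekind's law gives P = H (T :&: P).  The subgroup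
   Phi(P) (T :&: P) contains P' and is normalised by both H <= P and T, hence
   is normal in G.  If it were proper in P it would lie in R, forcing
   P <= R H; so it equals P, and Frattini non-generation yields P <= T,
   whence G = HT = T. *)

Lemma Phi_joing_normal (gT : finGroupType) (p : nat) (P K : {group gT}) :
  p.-group P -> K \subset P -> 'Phi(P) <*> K <| P.
Proof.
move=> pP sKP; apply: sub_der1_normal; last by rewrite join_subG Phi_sub.
by rewrite (subset_trans _ (joing_subl _ _)) // (Phi_joing pP) joing_subl.
Qed.

Section Supplement.

Variables (gT : finGroupType) (p : nat) (G P H T : {group gT}).
Hypotheses (pP : p.-group P) (nsPG : P <| G) (sHP : H \subset P).
Hypotheses (sTG : T \subset G) (defG : H * T = G).

Lemma mul_setI_supplement : H * (T :&: P) = P.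
Proof. by rewrite group_modl // defG (setIidPr (normal_sub nsPG)). Qed.

Lemma Phi_joing_setI_normal : 'Phi(P) <*> (T :&: P) <| G.
Proof.
have nsVP := Phi_joing_normal pP (subsetIr T P).
rewrite /normal (subset_trans (normal_sub nsVP) (normal_sub nsPG)) /=.
rewrite -defG mulG_subG (subset_trans sHP (normal_norm nsVP)) /=.
apply: normsY; last by rewrite normsI ?normG // (subset_trans sTG (normal_norm nsPG)).
exact: subset_trans sTG (normal_norm (char_normal_trans (Phi_char P) nsPG)).
Qed.

Lemma supplement_eq_of_Phi_joing : 'Phi(P) <*> (T :&: P) = P -> T = G :> {set gT}.
Proof.
move/Phi_nongen; rewrite genGid => eTP.
have sPT : P \subset T by rewrite -eTP subsetIl.
apply/eqP; rewrite eqEsubset sTG -defG mulG_subG subxx andbT.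
exact: subset_trans sHP sPT.
Qed.

End Supplement.

Theorem lemma4p5 (gT : finGroupType) (G P R H T : {group gT}) (p n : nat) :
  prime p ->
  p.-group P -> P <| G ->
  R <| G -> R \subset P ->
  chief_factor G R P -> #|P : R| = (p ^ n)%N -> (1 < n)%N ->
  (forall V : {group gT}, V <| G -> V \proper P -> V \subset R) ->
  H \subset P -> R \proper R * H -> R * H \proper P ->
  cyclic H -> (prime #|H| \/ #|H| = 4%N) ->
  T \subset G -> H * T = G ->
  T = G :> {set gT}.
Proof.
move=> _ pP nsPG nsRG _ _ _ _ minV sHP _ ltRH_P _ _ sTG defG.
have nsVG := Phi_joing_setI_normal pP nsPG sHP sTG defG.
have sVP : 'Phi(P) <*> (T :&: P) \subset P by rewrite join_subG Phi_sub subsetIr.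
have [ltVP | ] := boolP ('Phi(P) <*> (T :&: P) \proper P); last first.
  rewrite properEneq sVP andbT negbK => /eqP.
  exact: supplement_eq_of_Phi_joing sHP sTG defG.
have sTP_R : T :&: P \subset R := subset_trans (joing_subr _ _) (minV _ nsVG ltVP).
have sP_RH : P \subset R * H.
  rewrite -(mul_setI_supplement nsPG sHP defG).
  rewrite -(normC (subset_trans (subset_trans sHP (normal_sub nsPG)) (normal_norm nsRG))).
  exact: mulgS.
by move: ltRH_P; rewrite properE sP_RH andbF.
Qed.
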